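(* Let $q>1$ and let $\rho$ be a positive $2\pi$-periodic $C^2$ function with $(\ln\rho)''(t)<\sqrt{q}/(1+\sqrt{q})$ for all $t$; let $y(\theta)=\rho(\theta)(\cos\theta,\sin\theta)^T$, and let $\phi$ be a continuous function on $\mathbb{S}^1$. With the notation in the context, suppose there is a sequence of positive numbers $k_n\to\infty$ such that for every $\eta\in\mathbb{S}^1$ and every integer $N\ge0$, $$\sum_{j,l=1}^2\big(f_\eta^{j,l}\big)^N\frac{\phi(\mathcal{T}_{j,l}\eta+\delta_{l,2}\pi)\,\Psi_\eta^{j,l}}{|\det D^2\psi_\eta^{j,l}|^{1/2}}\,e^{\mathrm{i}\pi\frac{(-1)^l(1-(-1)^j)}{4}+\mathrm{i}k_n\psi_\eta^{j,l}}\longrightarrow0\quad(n\to\infty).$$ Let $\eta\in\mathbb{S}^1$ satisfy $\rho'(\theta_\eta)\rho'(\theta_\eta+\pi)\neq0$ and let $\Lambda=\{(j,l)\in\{1,2\}^2:\phi(\mathcal{T}_{j,l}\eta+\delta_{l,2}\pi)\neq0\}$. Then $\#\Lambda\in\{0,2,4\}$. If $\#\Lambda=4$, then for $j=1,2$, $$f_\eta^{j,1}=f_\eta^{j,2}\quad\text{and}\quad\frac{|\phi(\mathcal{T}_{j,1}\eta)|\,|\Psi_\eta^{j,1}|}{|\det D^2\psi_\eta^{j,1}|^{1/2}}=\frac{|\phi(\mathcal{T}_{j,2}\eta+\pi)|\,|\Psi_\eta^{j,2}|}{|\det D^2\psi_\eta^{j,2}|^{1/2}}.$$ If $\#\Lambda=2$,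 then $\Lambda=\{(j_1,l_1),(j_2,l_2)\}$ is neither $\{(1,1),(2,2)\}$ nor $\{(2,1),(1,2)\}$, and $$f_\eta^{j_1,l_1}=f_\eta^{j_2,l_2}\quad\text{and}\quad\frac{|\phi(\mathcal{T}_{j_1,l_1}\eta+\delta_{l_1,2}\pi)|\,|\Psi_\eta^{j_1,l_1}|}{|\det D^2\psi_\eta^{j_1,l_1}|^{1/2}}=\frac{|\phi(\mathcal{T}_{j_2,l_2}\eta+\delta_{l_2,2}\pi)|\,|\Psi_\eta^{j_2,l_2}|}{|\det D^2\psi_\eta^{j_2,l_2}|^{1/2}}.$$
   Context: Identify $\mathbb{S}^1$ with $\mathbb{R}/(2\pi\mathbb{Z})$ via $\theta\mapsto(\cos\theta,\sin\theta)^T$; $\theta_\eta$ is the angle of $\eta$, and $x^\perp=(-x_2,x_1)^T$. For $\eta\in\mathbb{S}^1$ and $\xi=(\cos\theta_\xi,\sin\theta_\xi)$: $\psi_\eta(\theta,\theta_\xi)=(\sqrt{q}\eta+\xi)\cdot y(\theta)$, $\Psi_\eta(\theta,\theta_\xi)=-(\sqrt{q}\eta-\xi)\cdot y'(\theta)^\perp$, and $D^2\psi_\eta(\theta,\theta_\xi)=\begin{bmatrix}(\sqrt{q}\eta+\xi)\cdot y''(\theta)&\xi^\perp\cdot y'(\theta)\\ \xi^\perp\cdot y'(\theta)&-\xi\cdot y(\theta)\end{bmatrix}$. For $l\in\{1,2\}$ let $\eta_l=(-1)^{l-1}\eta$, $\theta_q=\arccos(1/\sqrt q)$, $h(\theta)=\frac{\sqrt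 q\sin\theta}{\sqrt q\cos\theta+1}$; the equation $(\ln\rho)'(\theta)=h(\theta-\theta_{\eta_l})$ has exactly two solutions in $\mathbb{R}/(2\pi\mathbb{Z})$: $\mathcal{T}_{1,l}\eta$ with $\theta-\theta_{\eta_l}\in(\theta_q-\pi,\pi-\theta_q)$ and $\mathcal{T}_{2,l}\eta$ with $\theta-\theta_{\eta_l}\in(\pi-\theta_q,\pi+\theta_q)$ (mod $2\pi$). Set $\{\Psi_\eta^{j,l},\psi_\eta^{j,l},D^2\psi_\eta^{j,l}\}=\{\Psi_\eta,\psi_\eta,D^2\psi_\eta\}(\mathcal{T}_{j,l}\eta,\mathcal{T}_{j,l}\eta+\delta_{l,2}\pi)$ (these determinants are nonzero) and $f_\eta^{j,l}=\rho(\mathcal{T}_{j,l}\eta)\sin(\mathcal{T}_{j,l}\eta-\theta_\eta)$; $\delta_{l,2}$ is the Kronecker delta and $\phi$ is viewed as a function of the angle. *)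

From Stdlib Require Import Reals Lra List ClassicalEpsilon.
From Coquelicot Require Import Coquelicot.
Import ListNotations.
Open Scope R_scope.

Definition dot (x z : R * R) : R := fst x * fst z + snd x * snd z.
Definition perp (x : R * R) : R * R := (- snd x, fst x).
Definition vadd (x z : R * R) : R * R := (fst x + fst z, snd x + snd z).
Definition vsub (x z : R * R) : R * R := (fst x - fst z, snd x - snd z).
Definition vscal (a : R) (x : R * R) : R * R := (a * fst x, a * snd x).
Definition unitv (t : R) : R * R := (cos t, sin t).

Definition yc (rho : R -> R) (th : R) : R * R := (rho th * cos th, rho th * sin th).
Definition yc' (rho : R -> R) (th : R) : R * R :=
  (Derive (fun x => rho x * cos x) th, Derive (fun x => rho x * sin x) th).
Definition yc'' (rho : R -> R) (th : R) : R * R :=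
  (Derive_n (fun x => rho x * cos x) 2 th, Derive_n (fun x => rho x * sin x) 2 th).

(* eta = unitv te, xi = unitv tx *)
Definition psi_eta (q : R) (rho : R -> R) (te th tx : R) : R :=
  dot (vadd (vscal (sqrt q) (unitv te)) (unitv tx)) (yc rho th).
Definition Psi_eta (q : R) (rho : R -> R) (te th tx : R) : R :=
  - dot (vsub (vscal (sqrt q) (unitv te)) (unitv tx)) (perp (yc' rho th)).
(* determinant of the Hessian D^2 psi_eta(th, tx) *)
Definition detD2psi (q : R) (rho : R -> R) (te th tx : R) : R :=
  let a := dot (vadd (vscal (sqrt q) (unitv te)) (unitv tx)) (yc'' rho th) in
  let b := dot (perp (unitv tx)) (yc' rho th) in
  let d := - dot (unitv tx) (yc rho th) in
  a * d - b * b.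

Definition hq (q th : R) : R := sqrt q * sin th / (sqrt q * cos th + 1).
Definition theta_q (q : R) : R := acos (1 / sqrt q).

(* angle of eta_l = (-1)^(l-1) eta *)
Definition theta_l (l : nat) (te : R) : R := te + INR (l - 1) * PI.

(* T_{j,l} eta (as an angle, for eta = unitv te): a solution of
   (ln rho)'(theta) = h(theta - theta_{eta_l}) with theta - theta_{eta_l}
   in (theta_q - pi, pi - theta_q) for j = 1 and in (pi - theta_q, pi + theta_q)
   for j = 2 (the representative is chosen in that open interval; the solution
   is unique modulo 2 pi). *)
Definition Tjl (q : R) (rho : R -> R) (j l : nat) (te : R) : R :=
  epsilon (inhabits 0) (fun th =>
    (if Nat.eqb j 1
     then theta_l l te + theta_q q - PI < th < theta_l l te + PI - theta_q q
     else theta_l l te + PI - theta_q q < th < theta_l l te + PI + theta_q q) /\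
    Derive (fun x => ln (rho x)) th = hq q (th - theta_l l te)).

Definition Sjl (q : R) (rho : R -> R) (j l : nat) (te : R) : R :=
  Tjl q rho j l te + (if Nat.eqb l 2 then PI else 0).

Definition PSI (q : R) (rho : R -> R) (j l : nat) (te : R) : R :=
  Psi_eta q rho te (Tjl q rho j l te) (Sjl q rho j l te).
Definition PSIsmall (q : R) (rho : R -> R) (j l : nat) (te : R) : R :=
  psi_eta q rho te (Tjl q rho j l te) (Sjl q rho j l te).
Definition DET (q : R) (rho : R -> R) (j l : nat) (te : R) : R :=
  detD2psi q rho te (Tjl q rho j l te) (Sjl q rho j l te).
Definition fjl (q : R) (rho : R -> R) (j l : nat) (te : R) : R :=
  rho (Tjl q rho j l te) * sin (Tjl q rho j l te - te).

Definition cis (x : R) : C := (cos x, sin x).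

Definition phase (j l : nat) : R := PI * ((-1) ^ l * (1 - (-1) ^ j)) / 4.

Definition summand (q : R) (rho : R -> R) (phi : R -> C) (j l N : nat) (k te : R) : C :=
  Cmult (Cmult (RtoC (fjl q rho j l te ^ N * PSI q rho j l te
                      / sqrt (Rabs (DET q rho j l te))))
               (phi (Sjl q rho j l te)))
        (cis (phase j l + k * PSIsmall q rho j l te)).

Definition full_sum (q : R) (rho : R -> R) (phi : R -> C) (N : nat) (k te : R) : C :=
  Cplus (Cplus (summand q rho phi 1 1 N k te) (summand q rho phi 1 2 N k te))
        (Cplus (summand q rho phi 2 1 N k te) (summand q rho phi 2 2 N k te)).

Definition ampl (q : R) (rho : R -> R) (phi : R -> C) (j l : nat) (te : R) : R :=
  Cmod (phi (Sjl q rho j l te)) * Rabs (PSI q rho j l te) / sqrt (Rabs (DET q rho j l te)).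

Definition in_Lambda (q : R) (rho : R -> R) (phi : R -> C) (j l : nat) (te : R) : Prop :=
  (j = 1%nat \/ j = 2%nat) /\ (l = 1%nat \/ l = 2%nat) /\ phi (Sjl q rho j l te) <> 0.

Definition propb (P : Prop) : bool :=
  if excluded_middle_informative P then true else false.

Definition card_Lambda (q : R) (rho : R -> R) (phi : R -> C) (te : R) : nat :=
  length (filter (fun p : nat * nat => propb (in_Lambda q rho phi (fst p) (snd p) te))
                 [(1,1); (1,2); (2,1); (2,2)]%nat).

(* Write h for [hq q] and K = sqrt q / (1 + sqrt q).  Since K is the minimum of h', the
   hypothesis (ln rho)'' < K makes (ln rho)'(c + x) - h(x) nonincreasing on each branch
   of h.  This gives the points T_{j,l} by the intermediate value theorem, and shows
   Psi and det D^2 psi nonzero there, through the identities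
   Psi (sqrt q cos w + 1) = rho (q - 1) and
   det (sqrt q cos w + 1) = (rho (sqrt q cos w + 1))^2 (h'(w) - (ln rho)'').
   Comparing the two branches around theta_eta and theta_eta + pi, where (ln rho)' <> 0,
   orders the values: f^{2,2} lies strictly between 0 and f^{1,1}, and f^{2,1} strictly
   between 0 and f^{1,2}.  So f^{1,1} <> f^{2,2}, f^{1,2} <> f^{2,1}, the equalities
   f^{1,1} = f^{2,1} and f^{1,2} = f^{2,2} do not both hold, and equal f-values come in
   pairs at most.
   On the analytic side the summand is f^N u_n with |u_n| constant, equal to the
   amplitude.  Multiplying the vanishing power sums by a polynomial that kills all other
   f-values (a Vandermonde argument) shows that the sum of the u_n over one level set of f
   tends to 0.  A singleton level set therefore has amplitude 0, and a two-point level set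
   has equal amplitudes.  A finite case check on the four indices concludes. *)

From Stdlib Require Import Reals Lra Lia List ClassicalEpsilon.
From Coquelicot Require Import Coquelicot.
Import ListNotations.
Open Scope R_scope.

Lemma is_derive_continuity_pt (f : R -> R) x l : is_derive f x l -> continuity_pt f x.
Proof. intro H. apply continuity_pt_filterlim, (ex_derive_continuous f). exists l. exact H. Qed.

Lemma sqrt_gt1 q : 1 < q -> 1 < sqrt q.
Proof. intro Hq. rewrite <- sqrt_1. apply sqrt_lt_1_alt. lra. Qed.

Lemma inv_sqrt_bounds q : 1 < q -> 0 < 1 / sqrt q < 1.
Proof.
  intro Hq. pose proof (sqrt_gt1 q Hq).
  unfold Rdiv; rewrite Rmult_1_l.
  split; [apply Rinv_0_lt_compat; lra|]. rewrite <- Rinv_1. apply Rinv_lt_contravar; lra.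
Qed.

Lemma acos_lt c y : -1 <= c < y -> y <= 1 -> acos y < acos c.
Proof.
  intros Hc Hy. pose proof (acos_bound c). pose proof (acos_bound y).
  destruct (Rlt_le_dec (acos y) (acos c)) as [|Hle]; [assumption|].
  assert (Hcos : cos (acos y) <= cos (acos c)).
  { destruct (Req_dec (acos y) (acos c)) as [E|E]; [rewrite E; lra|].
    left. apply cos_decreasing_1; lra. }
  rewrite !cos_acos in Hcos; lra.
Qed.

Lemma sin_div_cos_sub_unbounded c M : -1 < c < 1 ->
  exists u, 0 < u < acos c /\ M < sin u / (cos u - c).
Proof.
  intro Hc.
  set (m := sqrt ((1 - c) * (1 + c) / 2)).
  assert (Hm : 0 < m) by (apply sqrt_lt_R0; nra).
  assert (HM : 0 < Rabs M + 1) by (pose proof (Rabs_pos M); lra).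
  set (d := Rmin ((1 - c) / 2) (m / (Rabs M + 1))).
  assert (Hd : 0 < d) by (apply Rmin_glb_lt; [lra | apply Rdiv_lt_0_compat; lra]).
  assert (Hd1 : d <= (1 - c) / 2) by apply Rmin_l.
  assert (Hd2 : d * (Rabs M + 1) <= m).
  { pose proof (Rmin_r ((1 - c) / 2) (m / (Rabs M + 1))) as H.
    apply (Rmult_le_compat_r (Rabs M + 1)) in H; [|lra].
    unfold d. replace (m / (Rabs M + 1) * (Rabs M + 1)) with m in H by (field; lra). exact H. }
  set (y := c + d).
  exists (acos y).
  assert (Hsin : m <= sin (acos y)).
  { rewrite sin_acos by (unfold y; lra). apply sqrt_le_1_alt. unfold Rsqr, y. nra. }
  split.
  - split; [apply acos_bound_lt; unfold y; lra | apply acos_lt; unfold y; lra].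
  - rewrite cos_acos by (unfold y; lra).
    replace (y - c) with d by (unfold y; ring).
    apply (Rmult_lt_reg_r d); [exact Hd|]. unfold Rdiv.
    rewrite Rmult_assoc, Rinv_l, Rmult_1_r by lra.
    pose proof (Rle_abs M). nra.
Qed.

(** * The function [hq] *)

Lemma cos_theta_q q : 1 < q -> cos (theta_q q) = 1 / sqrt q.
Proof. intro Hq. pose proof (inv_sqrt_bounds q Hq). apply cos_acos. lra. Qed.

Lemma theta_q_bounds q : 1 < q -> 0 < theta_q q < PI / 2.
Proof.
  intro Hq. pose proof (inv_sqrt_bounds q Hq). unfold theta_q.
  rewrite <- acos_1, <- acos_0. split; apply acos_lt; lra.
Qed.

Lemma pi_sub_theta_q q : PI - theta_q q = acos (- (1 / sqrt q)).
Proof. rewrite acos_opp. reflexivity. Qed.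

Lemma cos_gt_of_abs_lt a x : a <= PI -> - a < x < a -> cos a < cos x.
Proof.
  intros Ha Hx. destruct (Rle_dec 0 x).
  - apply cos_decreasing_1; lra.
  - rewrite <- (cos_neg x). apply cos_decreasing_1; lra.
Qed.

Lemma hq_denom_pos q x : 1 < q -> theta_q q - PI < x < PI - theta_q q ->
  0 < sqrt q * cos x + 1.
Proof.
  intros Hq Hx. pose proof (theta_q_bounds q Hq). pose proof (sqrt_gt1 q Hq).
  assert (Hc : cos (PI - theta_q q) < cos x) by (apply cos_gt_of_abs_lt; lra).
  rewrite Rtrigo_facts.cos_pi_minus, cos_theta_q in Hc by exact Hq.
  apply (Rmult_lt_compat_l (sqrt q)) in Hc; [|lra].
  replace (sqrt q * - (1 / sqrt q)) with (-1) in Hc by (field; lra). lra.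
Qed.

Lemma hq_pi_denom_pos q x : 1 < q -> - theta_q q < x < theta_q q ->
  0 < sqrt q * cos x - 1.
Proof.
  intros Hq Hx. pose proof (theta_q_bounds q Hq). pose proof (sqrt_gt1 q Hq).
  assert (Hc : cos (theta_q q) < cos x) by (apply cos_gt_of_abs_lt; lra).
  rewrite cos_theta_q in Hc by exact Hq.
  apply (Rmult_lt_compat_l (sqrt q)) in Hc; [|lra].
  replace (sqrt q * (1 / sqrt q)) with 1 in Hc by (field; lra). lra.
Qed.

Definition hq_deriv (q x : R) : R := sqrt q * (sqrt q + cos x) / (sqrt q * cos x + 1) ^ 2.

Lemma is_derive_hq q x : sqrt q * cos x + 1 <> 0 -> is_derive (hq q) x (hq_deriv q x).
Proof.
  intro H. unfold hq, hq_deriv. auto_derive; [exact H|].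
  pose proof (sin2_cos2 x) as E. unfold Rsqr in E.
  replace (sqrt q * (sqrt q + cos x)) with (sqrt q * (sqrt q * (sin x * sin x + cos x * cos x) + cos x))
    by (rewrite E; ring).
  field. exact H.
Qed.

Lemma is_derive_hq_add_pi q x : 1 < q -> - theta_q q < x < theta_q q ->
  is_derive (fun y => hq q (y + PI)) x (hq_deriv q (x + PI)).
Proof.
  intros Hq Hx. pose proof (hq_pi_denom_pos q x Hq Hx).
  rewrite <- (Rmult_1_l (hq_deriv q (x + PI))).
  apply (is_derive_comp (hq q) (fun y => y + PI)).
  - apply is_derive_hq. rewrite neg_cos. lra.
  - auto_derive; [exact I | ring].
Qed.

(* [sqrt q / (1 + sqrt q)] is [hq_deriv q 0], the minimum of [hq_deriv q]. *)
Lemma hq_deriv_ge q x : 1 < q -> sqrt q * cos x + 1 <> 0 ->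
  sqrt q / (1 + sqrt q) <= hq_deriv q x.
Proof.
  intros Hq H. pose proof (sqrt_gt1 q Hq). pose proof (COS_bound x). unfold hq_deriv.
  set (s := sqrt q) in *. set (c := cos x) in *.
  assert (HD : 0 < (s * c + 1) ^ 2) by (apply pow2_gt_0; exact H).
  assert (E : s * (s + c) / (s * c + 1) ^ 2 - s / (1 + s) =
     s * ((1 - c) * (s * s * c + s * s + s - 1)) / ((1 + s) * (s * c + 1) ^ 2))
    by (field; split; [exact H | lra]).
  assert (0 <= s * ((1 - c) * (s * s * c + s * s + s - 1)) / ((1 + s) * (s * c + 1) ^ 2)).
  { apply Rmult_le_pos; [|left; apply Rinv_0_lt_compat, Rmult_lt_0_compat; lra].
    apply Rmult_le_pos; [lra|]. apply Rmult_le_pos; [lra|]. nra. }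
  lra.
Qed.

Lemma hq_opp q x : hq q (- x) = - hq q x.
Proof. unfold hq. rewrite sin_neg, cos_neg. unfold Rdiv. ring. Qed.

Lemma hq_opp_pi q x : hq q (- x + PI) = - hq q (x + PI).
Proof. unfold hq. rewrite !neg_sin, !neg_cos, sin_neg, cos_neg. unfold Rdiv. ring. Qed.

Lemma hq_add_pi q x : sqrt q * cos x - 1 <> 0 ->
  hq q (x + PI) = sqrt q * sin x / (sqrt q * cos x - 1).
Proof. intro H. unfold hq. rewrite neg_sin, neg_cos. field. split; [exact H | lra]. Qed.

Lemma hq_lt_hq_add_pi q x : 1 < q -> 0 < x < theta_q q -> hq q x < hq q (x + PI).
Proof.
  intros Hq Hx. pose proof (theta_q_bounds q Hq). pose proof (sqrt_gt1 q Hq).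
  assert (Hm : 0 < sqrt q * cos x - 1) by (apply hq_pi_denom_pos; lra).
  assert (Hp : 0 < sqrt q * cos x + 1) by (apply hq_denom_pos; lra).
  assert (Hs : 0 < sin x) by (apply sin_gt_0; lra).
  rewrite hq_add_pi by lra. unfold hq.
  apply Rmult_lt_compat_l; [nra|]. apply Rinv_lt_contravar; nra.
Qed.

Lemma hq_mul_sin_add_cos_pos q x : 1 < q -> 0 < sqrt q * cos x + 1 ->
  0 < hq q x * sin x + cos x.
Proof.
  intros Hq H. pose proof (sqrt_gt1 q Hq). pose proof (COS_bound x).
  pose proof (sin2_cos2 x) as E. unfold Rsqr in E.
  replace (hq q x * sin x + cos x) with
    ((sqrt q * (sin x * sin x + cos x * cos x) + cos x) / (sqrt q * cos x + 1))
    by (unfold hq; field; lra).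
  rewrite E. apply Rdiv_lt_0_compat; lra.
Qed.

Lemma hq_unbounded q M : 1 < q -> exists u, 0 < u < PI - theta_q q /\ M < hq q u.
Proof.
  intro Hq. pose proof (inv_sqrt_bounds q Hq). pose proof (sqrt_gt1 q Hq).
  destruct (sin_div_cos_sub_unbounded (- (1 / sqrt q)) M) as (u & Hu & HM); [lra|].
  rewrite <- pi_sub_theta_q in Hu. exists u. split; [exact Hu|].
  assert (0 < sqrt q * cos u + 1) by (apply hq_denom_pos; lra).
  replace (hq q u) with (sin u / (cos u - - (1 / sqrt q))); [exact HM|].
  unfold hq. field. lra.
Qed.

Lemma hq_add_pi_unbounded q M : 1 < q ->
  exists u, 0 < u < theta_q q /\ M < hq q (u + PI).
Proof.
  intro Hq. pose proof (inv_sqrt_bounds q Hq). pose proof (sqrt_gt1 q Hq).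
  destruct (sin_div_cos_sub_unbounded (1 / sqrt q) M) as (u & Hu & HM); [lra|].
  exists u. split; [exact Hu|].
  assert (0 < sqrt q * cos u - 1) by (apply hq_pi_denom_pos; unfold theta_q; lra).
  rewrite hq_add_pi by lra.
  replace (sqrt q * sin u / (sqrt q * cos u - 1)) with (sin u / (cos u - 1 / sqrt q)); [exact HM|].
  field. lra.
Qed.

(** * The logarithmic derivative of [rho] *)

Lemma theta_l_1 te : theta_l 1 te = te.
Proof. unfold theta_l. cbn. ring. Qed.

Lemma theta_l_2 te : theta_l 2 te = te + PI.
Proof. unfold theta_l. cbn. ring. Qed.

Lemma Psi_eta_antipodal q rho te th tx :
  Psi_eta q rho te th (tx + PI) = - Psi_eta q rho (te + PI) th tx.
Proof.
  unfold Psi_eta, dot, vsub, vscal, unitv. rewrite !neg_cos, !neg_sin. cbn [fst snd]. ring.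
Qed.

Lemma detD2psi_antipodal q rho te th tx :
  detD2psi q rho te th (tx + PI) = detD2psi q rho (te + PI) th tx.
Proof.
  unfold detD2psi, dot, vadd, vscal, unitv, perp. rewrite !neg_cos, !neg_sin. cbn [fst snd]. ring.
Qed.

Section LogDerivative.

Variables (q : R) (rho : R -> R).
Hypothesis q_gt1 : 1 < q.
Hypothesis rho_pos : forall t, 0 < rho t.
Hypothesis rho_periodic : forall t, rho (t + 2 * PI) = rho t.
Hypothesis rho_derivable : forall t, ex_derive rho t.
Hypothesis rho'_derivable : forall t, ex_derive (Derive rho) t.
Hypothesis ln_rho''_lt : forall t, Derive_n (fun x => ln (rho x)) 2 t < sqrt q / (1 + sqrt q).

Definition log_deriv (t : R) : R := Derive rho t / rho t.
Definition log_deriv2 (t : R) : R :=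
  (Derive (Derive rho) t * rho t - Derive rho t ^ 2) / rho t ^ 2.

Lemma is_derive_ln_rho t : is_derive (fun x => ln (rho x)) t (log_deriv t).
Proof.
  unfold log_deriv. auto_derive.
  - split; [apply rho_derivable | split; [apply rho_pos | exact I]].
  - change (fun x => rho x) with rho. field. apply Rgt_not_eq, rho_pos.
Qed.

Lemma Derive_ln_rho t : Derive (fun x => ln (rho x)) t = log_deriv t.
Proof. apply is_derive_unique, is_derive_ln_rho. Qed.

Lemma is_derive_log_deriv t : is_derive log_deriv t (log_deriv2 t).
Proof.
  unfold log_deriv, log_deriv2. auto_derive.
  - repeat split; first [apply rho_derivable | apply rho'_derivable | apply Rgt_not_eq, rho_pos].
  - change (fun x => Derive rho x) with (Derive rho). change (fun x => rho x) with rho.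
    field. apply Rgt_not_eq, rho_pos.
Qed.

Lemma log_deriv2_lt t : log_deriv2 t < sqrt q / (1 + sqrt q).
Proof.
  rewrite <- (is_derive_unique _ _ _ (is_derive_log_deriv t)).
  replace (Derive log_deriv t) with (Derive_n (fun x => ln (rho x)) 2 t); [apply ln_rho''_lt|].
  apply Derive_ext. exact Derive_ln_rho.
Qed.

Lemma is_derive_log_deriv_shift c x :
  is_derive (fun y => log_deriv (c + y)) x (log_deriv2 (c + x)).
Proof.
  rewrite <- (Rmult_1_l (log_deriv2 (c + x))).
  apply (is_derive_comp log_deriv (fun y => c + y)); [apply is_derive_log_deriv|].
  auto_derive; [exact I | ring].
Qed.

Lemma log_deriv_periodic t : log_deriv (t + 2 * PI) = log_deriv t.
Proof.
  unfold log_deriv. rewrite rho_periodic. f_equal.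
  assert (H : is_derive (fun x => rho (x + 2 * PI)) t (Derive rho (t + 2 * PI))).
  { auto_derive; [apply rho_derivable | change (fun x => rho x) with rho; ring]. }
  rewrite <- (is_derive_unique _ _ _ H). apply Derive_ext, rho_periodic.
Qed.

Lemma log_deriv_sub_noninc (g g' : R -> R) c a b : a <= b ->
  (forall x, a <= x <= b -> is_derive g x (g' x) /\ sqrt q / (1 + sqrt q) <= g' x) ->
  log_deriv (c + b) - g b <= log_deriv (c + a) - g a.
Proof.
  intros Hab Hg. destruct (Req_dec a b) as [<- | Hne]; [lra|].
  destruct (MVT_cor2 (fun x => log_deriv (c + x) - g x)
              (fun x => log_deriv2 (c + x) - g' x) a b) as (x & Hx & Ix); [lra| |].
  - intros x Hx. apply is_derive_Reals, (is_derive_minus (fun x => log_deriv (c + x)) g).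
    + apply is_derive_log_deriv_shift.
    + apply Hg; exact Hx.
  - pose proof (log_deriv2_lt (c + x)). destruct (Hg x) as [_ Hg']; [lra|]. nra.
Qed.

Lemma log_deriv_sub_hq_noninc c a b : theta_q q - PI < a -> a <= b -> b < PI - theta_q q ->
  log_deriv (c + b) - hq q b <= log_deriv (c + a) - hq q a.
Proof.
  intros Ha Hab Hb. apply (log_deriv_sub_noninc _ (hq_deriv q)); [exact Hab|].
  intros x Hx. assert (H := hq_denom_pos q x q_gt1 ltac:(lra)).
  split; [apply is_derive_hq | apply hq_deriv_ge]; lra.
Qed.

Lemma log_deriv_sub_hq_pi_noninc c a b : - theta_q q < a -> a <= b -> b < theta_q q ->
  log_deriv (c + b) - hq q (b + PI) <= log_deriv (c + a) - hq q (a + PI).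
Proof.
  intros Ha Hab Hb.
  apply (log_deriv_sub_noninc (fun x => hq q (x + PI)) (fun x => hq_deriv q (x + PI)));
    [exact Hab|].
  intros x Hx. assert (H := hq_pi_denom_pos q x q_gt1 ltac:(lra)).
  split; [apply is_derive_hq_add_pi; [exact q_gt1 | lra]|].
  apply hq_deriv_ge; [exact q_gt1 | rewrite neg_cos; lra].
Qed.

Lemma log_deriv_shift_bounds c x :
  (0 <= x <= PI -> log_deriv (c + x) <= log_deriv c + sqrt q / (1 + sqrt q) * PI) /\
  (- PI <= x <= 0 -> log_deriv c - sqrt q / (1 + sqrt q) * PI <= log_deriv (c + x)).
Proof.
  set (K := sqrt q / (1 + sqrt q)).
  assert (HK : 0 < K) by (pose proof (sqrt_gt1 q q_gt1); apply Rdiv_lt_0_compat; lra).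
  assert (Hlin : forall a b, a <= b -> log_deriv (c + b) - K * b <= log_deriv (c + a) - K * a).
  { intros a b Hab. apply (log_deriv_sub_noninc (fun y => K * y) (fun _ => K)); [exact Hab|].
    intros y _. split; [|apply Rle_refl]. auto_derive; [exact I | ring]. }
  replace (log_deriv c) with (log_deriv (c + 0)) by (rewrite Rplus_0_r; reflexivity).
  split; intro Hx.
  - pose proof (Hlin 0 x ltac:(lra)). nra.
  - pose proof (Hlin x 0 ltac:(lra)). nra.
Qed.

Lemma log_deriv_eq_exists (g : R -> R) c w : w <= PI ->
  (forall x, - w < x < w -> continuity_pt g x) ->
  (forall M, exists u, 0 < u < w /\ M < g u) ->
  (forall M, exists u, 0 < u < w /\ g (- u) < M) ->
  exists x, - w < x < w /\ log_deriv (c + x) = g x.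
Proof.
  intros Hw Hg Hup Hdn.
  destruct (Hup (log_deriv c + sqrt q / (1 + sqrt q) * PI)) as (u & Hu & Hgu).
  destruct (Hdn (log_deriv c - sqrt q / (1 + sqrt q) * PI)) as (v & Hv & Hgv).
  pose proof (proj1 (log_deriv_shift_bounds c u) ltac:(lra)).
  pose proof (proj2 (log_deriv_shift_bounds c (- v)) ltac:(lra)).
  destruct (Ranalysis5.IVT_interv (fun x => g x - log_deriv (c + x)) (- v) u)
    as (x & Hx & Ex); [| lra | cbn; lra | cbn; lra |].
  - intros a Ha. apply continuity_pt_minus; [apply Hg; lra|].
    eapply is_derive_continuity_pt, is_derive_log_deriv_shift.
  - exists x. split; [lra | cbn in Ex; lra].
Qed.

Lemma Tjl_spec j l te : (j = 1 \/ j = 2)%nat ->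
  (if Nat.eqb j 1
   then theta_l l te + theta_q q - PI < Tjl q rho j l te < theta_l l te + PI - theta_q q
   else theta_l l te + PI - theta_q q < Tjl q rho j l te < theta_l l te + PI + theta_q q) /\
  log_deriv (Tjl q rho j l te) = hq q (Tjl q rho j l te - theta_l l te).
Proof.
  intro Hj. rewrite <- Derive_ln_rho. pattern (Tjl q rho j l te).
  unfold Tjl. apply epsilon_spec.
  pose proof (theta_q_bounds q q_gt1). set (c := theta_l l te).
  destruct Hj as [-> | ->]; cbn [Nat.eqb].
  - destruct (log_deriv_eq_exists (hq q) c (PI - theta_q q)) as (x & Hx & Ex); [lra | | | |].
    + intros x Hx. eapply is_derive_continuity_pt, is_derive_hq.
      pose proof (hq_denom_pos q x q_gt1 ltac:(lra)). lra.
    + intro M. apply hq_unbounded, q_gt1.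
    + intro M. destruct (hq_unbounded q (- M) q_gt1) as (u & Hu & HM).
      exists u. rewrite hq_opp. split; [exact Hu | lra].
    + exists (c + x). rewrite Derive_ln_rho, Ex. split; [lra | f_equal; ring].
  - destruct (log_deriv_eq_exists (fun x => hq q (x + PI)) (c + PI) (theta_q q))
      as (x & Hx & Ex); [lra | | | |].
    + intros x Hx. eapply is_derive_continuity_pt, is_derive_hq_add_pi; assumption.
    + intro M. apply hq_add_pi_unbounded, q_gt1.
    + intro M. destruct (hq_add_pi_unbounded q (- M) q_gt1) as (u & Hu & HM).
      exists u. rewrite hq_opp_pi. split; [exact Hu | lra].
    + exists (c + PI + x). rewrite Derive_ln_rho, Ex. split; [lra | f_equal; ring].
Qed.

Lemma rho_sin_increasing c a b : a < b -> theta_q q - PI < a -> b < PI - theta_q q ->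
  (forall x, a <= x <= b -> 0 <= (log_deriv (c + x) - hq q x) * sin x) ->
  rho (c + a) * sin a < rho (c + b) * sin b.
Proof.
  intros Hab Ha Hb Hsign.
  destruct (MVT_cor2 (fun x => rho (c + x) * sin x)
              (fun x => rho (c + x) * (log_deriv (c + x) * sin x + cos x)) a b Hab)
    as (x & Ex & Hx).
  - intros x _. apply is_derive_Reals. auto_derive; [apply rho_derivable|].
    unfold log_deriv. change (fun y => rho y) with rho. field. apply Rgt_not_eq, rho_pos.
  - pose proof (Hsign x ltac:(lra)). pose proof (rho_pos (c + x)).
    pose proof (hq_mul_sin_add_cos_pos q x q_gt1 (hq_denom_pos q x q_gt1 ltac:(lra))).
    assert (0 < rho (c + x) * (log_deriv (c + x) * sin x + cos x)) by nra.
    nra.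
Qed.

Lemma branch_values_ordered_pos c x1 x2 :
  theta_q q - PI < x1 < PI - theta_q q -> log_deriv (c + x1) = hq q x1 ->
  - theta_q q < x2 < theta_q q -> log_deriv (c + x2) = hq q (x2 + PI) ->
  0 < log_deriv c -> 0 < rho (c + x2) * sin x2 < rho (c + x1) * sin x1.
Proof.
  intros Hx1 E1 Hx2 E2 Hc. pose proof (theta_q_bounds q q_gt1).
  assert (E0 : log_deriv (c + 0) - hq q 0 = log_deriv c)
    by (unfold hq; rewrite Rplus_0_r, sin_0; unfold Rdiv; ring).
  assert (E0' : log_deriv (c + 0) - hq q (0 + PI) = log_deriv c)
    by (unfold hq; rewrite Rplus_0_r, Rplus_0_l, sin_PI; unfold Rdiv; ring).
  assert (P1 : 0 < x1).
  { destruct (Rlt_le_dec 0 x1) as [|H1]; [assumption|].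
    pose proof (log_deriv_sub_hq_noninc c x1 0 ltac:(lra) H1 ltac:(lra)). lra. }
  assert (P2 : 0 < x2).
  { destruct (Rlt_le_dec 0 x2) as [|H2]; [assumption|].
    pose proof (log_deriv_sub_hq_pi_noninc c x2 0 ltac:(lra) H2 ltac:(lra)). lra. }
  assert (P21 : x2 < x1).
  { destruct (Rlt_le_dec x2 x1) as [|H12]; [assumption|].
    pose proof (log_deriv_sub_hq_noninc c x1 x2 ltac:(lra) H12 ltac:(lra)).
    pose proof (hq_lt_hq_add_pi q x2 q_gt1 ltac:(lra)). lra. }
  split.
  - apply Rmult_lt_0_compat; [apply rho_pos | apply sin_gt_0; lra].
  - apply rho_sin_increasing; [lra | lra | lra |]. intros x Hx.
    pose proof (log_deriv_sub_hq_noninc c x x1 ltac:(lra) ltac:(lra) ltac:(lra)).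
    apply Rmult_le_pos; [lra | left; apply sin_gt_0; lra].
Qed.

Lemma branch_values_ordered_neg c x1 x2 :
  theta_q q - PI < x1 < PI - theta_q q -> log_deriv (c + x1) = hq q x1 ->
  - theta_q q < x2 < theta_q q -> log_deriv (c + x2) = hq q (x2 + PI) ->
  log_deriv c < 0 -> rho (c + x1) * sin x1 < rho (c + x2) * sin x2 < 0.
Proof.
  intros Hx1 E1 Hx2 E2 Hc. pose proof (theta_q_bounds q q_gt1).
  assert (E0 : log_deriv (c + 0) - hq q 0 = log_deriv c)
    by (unfold hq; rewrite Rplus_0_r, sin_0; unfold Rdiv; ring).
  assert (E0' : log_deriv (c + 0) - hq q (0 + PI) = log_deriv c)
    by (unfold hq; rewrite Rplus_0_r, Rplus_0_l, sin_PI; unfold Rdiv; ring).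
  assert (N1 : x1 < 0).
  { destruct (Rlt_le_dec x1 0) as [|H1]; [assumption|].
    pose proof (log_deriv_sub_hq_noninc c 0 x1 ltac:(lra) H1 ltac:(lra)). lra. }
  assert (N2 : x2 < 0).
  { destruct (Rlt_le_dec x2 0) as [|H2]; [assumption|].
    pose proof (log_deriv_sub_hq_pi_noninc c 0 x2 ltac:(lra) H2 ltac:(lra)). lra. }
  assert (N12 : x1 < x2).
  { destruct (Rlt_le_dec x1 x2) as [|H21]; [assumption|].
    pose proof (log_deriv_sub_hq_noninc c x2 x1 ltac:(lra) H21 ltac:(lra)).
    pose proof (hq_lt_hq_add_pi q (- x2) q_gt1 ltac:(lra)) as Hh.
    rewrite hq_opp, hq_opp_pi in Hh. lra. }
  assert (Hsin : forall x, - PI < x < 0 -> sin x < 0).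
  { intros x Hx. rewrite <- (Ropp_involutive x), sin_neg.
    pose proof (sin_gt_0 (- x) ltac:(lra) ltac:(lra)). lra. }
  split.
  - apply rho_sin_increasing; [lra | lra | lra |]. intros x Hx.
    pose proof (log_deriv_sub_hq_noninc c x1 x ltac:(lra) ltac:(lra) ltac:(lra)).
    pose proof (Hsin x ltac:(lra)). nra.
  - pose proof (rho_pos (c + x2)). pose proof (Hsin x2 ltac:(lra)). nra.
Qed.

Lemma branch_values_ordered c t1 t2 :
  theta_q q - PI < t1 - c < PI - theta_q q -> log_deriv t1 = hq q (t1 - c) ->
  - theta_q q < t2 - c < theta_q q -> log_deriv t2 = hq q (t2 - c + PI) ->
  log_deriv c <> 0 ->
  (0 < rho t2 * sin (t2 - c) < rho t1 * sin (t1 - c)) \/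
  (rho t1 * sin (t1 - c) < rho t2 * sin (t2 - c) < 0).
Proof.
  intros H1 E1 H2 E2 Hc.
  pose proof (branch_values_ordered_pos c (t1 - c) (t2 - c)) as Hpos.
  pose proof (branch_values_ordered_neg c (t1 - c) (t2 - c)) as Hneg.
  replace (c + (t1 - c)) with t1 in Hpos, Hneg by ring.
  replace (c + (t2 - c)) with t2 in Hpos, Hneg by ring.
  destruct (Rlt_dec 0 (log_deriv c)); [left; apply Hpos | right; apply Hneg]; auto; lra.
Qed.

Lemma fjl_ordered_at_te te : log_deriv te <> 0 ->
  (0 < fjl q rho 2 2 te < fjl q rho 1 1 te) \/ (fjl q rho 1 1 te < fjl q rho 2 2 te < 0).
Proof.
  intro Hc.
  destruct (Tjl_spec 1 1 te) as [I1 E1]; [auto|]. destruct (Tjl_spec 2 2 te) as [I2 E2]; [auto|].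
  cbn [Nat.eqb] in I1, I2. rewrite theta_l_1 in I1, E1. rewrite theta_l_2 in I2, E2.
  unfold fjl. set (T1 := Tjl q rho 1 1 te) in *. set (T2 := Tjl q rho 2 2 te) in *.
  assert (Hrho : rho (T2 - 2 * PI) = rho T2) by (rewrite <- rho_periodic; f_equal; ring).
  assert (Hsin : sin (T2 - 2 * PI - te) = sin (T2 - te)).
  { replace (T2 - te) with (T2 - 2 * PI - te + 2 * PI) by ring.
    rewrite sin_plus, sin_2PI, cos_2PI. ring. }
  rewrite <- Hrho, <- Hsin.
  apply branch_values_ordered; [lra | exact E1 | lra | | exact Hc].
  replace (log_deriv (T2 - 2 * PI)) with (log_deriv T2)
    by (rewrite <- (log_deriv_periodic (T2 - 2 * PI)); f_equal; ring).
  rewrite E2. f_equal; ring.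
Qed.

Lemma fjl_ordered_at_te_pi te : log_deriv (te + PI) <> 0 ->
  (fjl q rho 1 2 te < fjl q rho 2 1 te < 0) \/ (0 < fjl q rho 2 1 te < fjl q rho 1 2 te).
Proof.
  intro Hc.
  destruct (Tjl_spec 1 2 te) as [I1 E1]; [auto|]. destruct (Tjl_spec 2 1 te) as [I2 E2]; [auto|].
  cbn [Nat.eqb] in I1, I2. rewrite theta_l_2 in I1, E1. rewrite theta_l_1 in I2, E2.
  unfold fjl. set (T1 := Tjl q rho 1 2 te) in *. set (T2 := Tjl q rho 2 1 te) in *.
  assert (Hsin : forall t, sin (t - (te + PI)) = - sin (t - te)).
  { intro t. replace (t - te) with (t - (te + PI) + PI) by ring. rewrite neg_sin. ring. }
  assert (E2' : log_deriv T2 = hq q (T2 - (te + PI) + PI)) by (rewrite E2; f_equal; ring).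
  pose proof (branch_values_ordered (te + PI) T1 T2 ltac:(lra) E1 ltac:(lra) E2' Hc) as H.
  rewrite !Hsin in H. lra.
Qed.

Lemma fjl_separation te : Derive rho te * Derive rho (te + PI) <> 0 ->
  fjl q rho 1 1 te <> fjl q rho 2 2 te /\ fjl q rho 1 2 te <> fjl q rho 2 1 te /\
  ~ (fjl q rho 1 1 te = fjl q rho 2 1 te /\ fjl q rho 1 2 te = fjl q rho 2 2 te).
Proof.
  intro Hd.
  assert (Hld : forall t, Derive rho t <> 0 -> log_deriv t <> 0).
  { intros t Ht. unfold log_deriv. pose proof (rho_pos t).
    apply Rmult_integral_contrapositive; split; [exact Ht | apply Rinv_neq_0_compat; lra]. }
  assert (H0 : log_deriv te <> 0) by (apply Hld; intro Z; apply Hd; rewrite Z; ring).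
  assert (Hpi : log_deriv (te + PI) <> 0) by (apply Hld; intro Z; apply Hd; rewrite Z; ring).
  destruct (fjl_ordered_at_te te H0); destruct (fjl_ordered_at_te_pi te Hpi); repeat split; lra.
Qed.

Lemma Derive_rho_cos t : Derive (fun x => rho x * cos x) t = Derive rho t * cos t - rho t * sin t.
Proof.
  apply is_derive_unique. auto_derive; [apply rho_derivable|].
  change (fun x => rho x) with rho. ring.
Qed.

Lemma Derive_rho_sin t : Derive (fun x => rho x * sin x) t = Derive rho t * sin t + rho t * cos t.
Proof.
  apply is_derive_unique. auto_derive; [apply rho_derivable|].
  change (fun x => rho x) with rho. ring.
Qed.

Lemma yc'_eq th : yc' rho th =
  (Derive rho th * cos th - rho th * sin th, Derive rho th * sin th + rho th * cos th).
Proof. unfold yc'. rewrite Derive_rho_cos, Derive_rho_sin. reflexivity. Qed.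

Lemma yc''_eq th : yc'' rho th =
  (Derive (Derive rho) th * cos th - 2 * Derive rho th * sin th - rho th * cos th,
   Derive (Derive rho) th * sin th + 2 * Derive rho th * cos th - rho th * sin th).
Proof.
  unfold yc''. cbn [Derive_n]. rewrite (Derive_ext _ _ _ Derive_rho_cos), (Derive_ext _ _ _ Derive_rho_sin).
  f_equal; apply is_derive_unique; auto_derive; try (repeat split; first [apply rho_derivable | apply rho'_derivable]);
    change (fun x => rho x) with rho; change (fun x => Derive rho x) with (Derive rho); ring.
Qed.

Lemma Psi_eta_diag c th : Psi_eta q rho c th th =
  sqrt q * (Derive rho th * sin (th - c) + rho th * cos (th - c)) - rho th.
Proof.
  assert (N : cos th ^ 2 + sin th ^ 2 = 1) by (rewrite <- (sin2_cos2 th); unfold Rsqr; ring).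
  unfold Psi_eta, dot, vsub, vscal, unitv, perp. rewrite yc'_eq. cbn [fst snd].
  transitivity (sqrt q * (Derive rho th * sin (th - c) + rho th * cos (th - c))
                - rho th * (cos th ^ 2 + sin th ^ 2));
    [rewrite sin_minus, cos_minus; ring | rewrite N; ring].
Qed.

Lemma detD2psi_diag c th : detD2psi q rho c th th =
  2 * sqrt q * rho th * Derive rho th * sin (th - c)
  - rho th * (Derive (Derive rho) th - rho th) * (sqrt q * cos (th - c) + 1) - rho th ^ 2.
Proof.
  assert (N : cos th ^ 2 + sin th ^ 2 = 1) by (rewrite <- (sin2_cos2 th); unfold Rsqr; ring).
  unfold detD2psi, dot, vadd, vscal, unitv, perp. rewrite yc'_eq, yc''_eq. unfold yc. cbn [fst snd].
  set (N' := cos th ^ 2 + sin th ^ 2).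
  transitivity (- (sqrt q * ((Derive (Derive rho) th - rho th) * cos (th - c)
                             - 2 * Derive rho th * sin (th - c))
                   + (Derive (Derive rho) th - rho th) * N') * (rho th * N')
                - (rho th * N') ^ 2);
    [unfold N'; rewrite sin_minus, cos_minus; ring | unfold N'; rewrite N; ring].
Qed.

Lemma Derive_rho_mul_denom th w : sqrt q * cos w + 1 <> 0 -> log_deriv th = hq q w ->
  Derive rho th * (sqrt q * cos w + 1) = rho th * sqrt q * sin w.
Proof.
  intros HD E. pose proof (rho_pos th). unfold log_deriv, hq in E.
  apply (Rmult_eq_reg_r (/ rho th)); [|apply Rinv_neq_0_compat; lra].
  transitivity (Derive rho th / rho th * (sqrt q * cos w + 1)); [field; lra|].
  rewrite E. field. split; lra.
Qed.

Lemma Psi_eta_diag_mul_denom c th :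
  sqrt q * cos (th - c) + 1 <> 0 -> log_deriv th = hq q (th - c) ->
  Psi_eta q rho c th th * (sqrt q * cos (th - c) + 1) = rho th * (q - 1).
Proof.
  intros HD E. set (w := th - c) in *. rewrite Psi_eta_diag. fold w.
  pose proof (Derive_rho_mul_denom th w HD E) as Hr.
  assert (Hw : sin w ^ 2 + cos w ^ 2 = 1) by (rewrite <- (sin2_cos2 w); unfold Rsqr; ring).
  assert (Hs : sqrt q * sqrt q = q) by (apply sqrt_sqrt; lra).
  transitivity (sqrt q * sin w * (Derive rho th * (sqrt q * cos w + 1))
                + rho th * (sqrt q * sqrt q * cos w ^ 2 - 1)); [ring|].
  rewrite Hr.
  transitivity (rho th * (sqrt q * sqrt q * (sin w ^ 2 + cos w ^ 2) - 1)); [ring|].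
  rewrite Hw, Hs. ring.
Qed.

Lemma detD2psi_diag_mul_denom c th :
  sqrt q * cos (th - c) + 1 <> 0 -> log_deriv th = hq q (th - c) ->
  detD2psi q rho c th th * (sqrt q * cos (th - c) + 1) =
  (rho th * (sqrt q * cos (th - c) + 1)) ^ 2 * (hq_deriv q (th - c) - log_deriv2 th).
Proof.
  intros HD E. set (w := th - c) in *. rewrite detD2psi_diag. fold w.
  pose proof (Derive_rho_mul_denom th w HD E) as Hr. pose proof (rho_pos th).
  assert (Hw : sin w ^ 2 + cos w ^ 2 = 1) by (rewrite <- (sin2_cos2 w); unfold Rsqr; ring).
  set (D := sqrt q * cos w + 1) in *. set (r1 := Derive rho th) in *.
  transitivity (2 * sqrt q * rho th * sin w * (r1 * D)
                - rho th * Derive (Derive rho) th * D ^ 2 + rho th ^ 2 * (D ^ 2 - D)); [ring|].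
  transitivity (rho th ^ 2 * sqrt q * (sqrt q + cos w)
                - D ^ 2 * (Derive (Derive rho) th * rho th) + (r1 * D) ^ 2);
    [| unfold hq_deriv, log_deriv2; fold D r1; field; split; lra].
  rewrite Hr. unfold D.
  transitivity (rho th ^ 2 * sqrt q * sqrt q * (sin w ^ 2 + cos w ^ 2 - 1)
                + rho th ^ 2 * sqrt q * (sqrt q + cos w) - (sqrt q * cos w + 1) ^ 2
                * (Derive (Derive rho) th * rho th) + (rho th * sqrt q * sin w) ^ 2 ); [ring|].
  rewrite Hw. ring.
Qed.

Lemma Psi_det_diag_neq0 c th :
  sqrt q * cos (th - c) + 1 <> 0 -> log_deriv th = hq q (th - c) ->
  Psi_eta q rho c th th <> 0 /\ detD2psi q rho c th th <> 0.
Proof.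
  intros HD E. set (w := th - c) in *. pose proof (rho_pos th) as Hr. split; intro Z.
  - pose proof (Psi_eta_diag_mul_denom c th HD E) as H. rewrite Z in H. nra.
  - pose proof (detD2psi_diag_mul_denom c th HD E) as H. rewrite Z, Rmult_0_l in H. fold w in H.
    pose proof (log_deriv2_lt th). pose proof (hq_deriv_ge q w q_gt1 HD).
    assert (0 < (rho th * (sqrt q * cos w + 1)) ^ 2 * (hq_deriv q w - log_deriv2 th)).
    { apply Rmult_lt_0_compat; [|lra].
      apply pow2_gt_0, Rmult_integral_contrapositive; split; lra. }
    lra.
Qed.

Lemma PSI_DET_neq0 j l te : (j = 1 \/ j = 2)%nat -> (l = 1 \/ l = 2)%nat ->
  PSI q rho j l te <> 0 /\ DET q rho j l te <> 0.
Proof.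
  intros Hj Hl. destruct (Tjl_spec j l te Hj) as [I E].
  set (T := Tjl q rho j l te) in *.
  assert (HD : sqrt q * cos (T - theta_l l te) + 1 <> 0).
  { destruct Hj as [-> | ->]; cbn [Nat.eqb] in I.
    - pose proof (hq_denom_pos q (T - theta_l l te) q_gt1 ltac:(lra)). lra.
    - pose proof (hq_pi_denom_pos q (T - theta_l l te - PI) q_gt1 ltac:(lra)).
      replace (T - theta_l l te) with (T - theta_l l te - PI + PI) by ring.
      rewrite neg_cos. lra. }
  destruct (Psi_det_diag_neq0 (theta_l l te) T HD E) as [HP HDet].
  unfold PSI, DET, Sjl. fold T.
  destruct Hl as [-> | ->]; cbn [Nat.eqb].
  - rewrite theta_l_1 in HP, HDet. rewrite Rplus_0_r. split; assumption.
  - rewrite theta_l_2 in HP, HDet. rewrite Psi_eta_antipodal, detD2psi_antipodal.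
    split; [apply Ropp_neq_0_compat|]; assumption.
Qed.

End LogDerivative.

(** * Vanishing power sums *)

Lemma lim0_Cmod (u : nat -> C) :
  filterlim u eventually (locally (RtoC 0)) <-> is_lim_seq (fun n => Cmod (u n)) 0.
Proof.
  rewrite (@filterlim_locally_ball_norm C_AbsRing nat C_NormedModule eventually _ u (RtoC 0)).
  rewrite <- is_lim_seq_spec. unfold is_lim_seq', ball_norm.
  split; intros H eps; refine (filter_imp _ _ _ (H eps)); intros n;
    change norm with Cmod; change (@minus C_NormedModule) with Cminus;
    replace (u n - 0)%C with (u n) by ring;
    rewrite Rminus_0_r, Rabs_pos_eq by apply Cmod_ge_0; auto.
Qed.

Lemma lim0_Cplus (u v : nat -> C) :
  filterlim u eventually (locally (RtoC 0)) -> filterlim v eventually (locally (RtoC 0)) ->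
  filterlim (fun n => (u n + v n)%C) eventually (locally (RtoC 0)).
Proof.
  intros Hu Hv.
  pose proof (filterlim_comp_2 u v Cplus Hu Hv
                (@filterlim_plus C_AbsRing C_NormedModule (RtoC 0) (RtoC 0))) as H.
  change (@plus C_NormedModule) with Cplus in H. rewrite Cplus_0_l in H. exact H.
Qed.

Lemma lim0_Cscal (a : C) (u : nat -> C) :
  filterlim u eventually (locally (RtoC 0)) ->
  filterlim (fun n => (a * u n)%C) eventually (locally (RtoC 0)).
Proof.
  intro Hu.
  pose proof (filterlim_comp _ _ _ u (Cmult a) _ _ _ Hu
                (@filterlim_scal_r C_AbsRing C_NormedModule a (RtoC 0))) as H.
  change (@scal _ C_NormedModule) with Cmult in H. rewrite Cmult_0_r in H. exact H.
Qed.

Lemma Cmod_const_lim0 (z : nat -> C) A :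
  (forall n, Cmod (z n) = A) -> filterlim z eventually (locally (RtoC 0)) -> A = 0.
Proof.
  intros HA Hz. apply lim0_Cmod in Hz.
  apply (is_lim_seq_ext _ (fun _ => A)) in Hz; [|exact HA].
  apply is_lim_seq_unique in Hz. rewrite Lim_seq_const in Hz. congruence.
Qed.

Lemma Cmod_const_sum_lim0 (z w : nat -> C) A B :
  (forall n, Cmod (z n) = A) -> (forall n, Cmod (w n) = B) ->
  filterlim (fun n => (z n + w n)%C) eventually (locally (RtoC 0)) -> A = B.
Proof.
  intros HA HB Hzw. apply lim0_Cmod in Hzw.
  assert (Hle : forall n, Rabs (A - B) <= Cmod (z n + w n)).
  { intro n. rewrite <- (HA n), <- (HB n). apply Rabs_le. split.
    - pose proof (Cmod_triangle (z n + w n) (- z n)) as T.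
      replace (z n + w n + - z n)%C with (w n) in T by ring. rewrite Cmod_opp in T. lra.
    - pose proof (Cmod_triangle (z n + w n) (- w n)) as T.
      replace (z n + w n + - w n)%C with (z n) in T by ring. rewrite Cmod_opp in T. lra. }
  pose proof (is_lim_seq_le _ _ _ _ Hle (is_lim_seq_const (Rabs (A - B))) Hzw) as H.
  cbn in H. pose proof (Rabs_pos (A - B)). apply Rminus_diag_uniq, Rabs_eq_0. lra.
Qed.

Definition Reqb (x y : R) : bool := if Req_EM_T x y then true else false.

Definition Csum {I : Type} (s : list I) (g : I -> C) : C :=
  fold_right (fun i z => (g i + z)%C) (RtoC 0) s.

Lemma Csum_plus {I} (s : list I) g h :
  Csum s (fun i => (g i + h i)%C) = (Csum s g + Csum s h)%C.
Proof. unfold Csum. induction s as [|i s IH]; cbn; [ring | rewrite IH; ring]. Qed.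

Lemma Csum_scal {I} (s : list I) a g : Csum s (fun i => (a * g i)%C) = (a * Csum s g)%C.
Proof. unfold Csum. induction s as [|i s IH]; cbn; [ring | rewrite IH; ring]. Qed.

Lemma Csum_ext_in {I} (s : list I) g h : (forall i, In i s -> g i = h i) -> Csum s g = Csum s h.
Proof.
  unfold Csum. induction s as [|i s IH]; intro E; cbn; [reflexivity|].
  rewrite E, IH; [reflexivity | intros j Hj; apply E; right; exact Hj | left; reflexivity].
Qed.

Lemma Csum_filter {I} (s : list I) (b : I -> bool) g :
  Csum s (fun i => if b i then g i else RtoC 0) = Csum (filter b s) g.
Proof.
  unfold Csum. induction s as [|i s IH]; cbn; [reflexivity|].
  rewrite IH. destruct (b i); cbn; [reflexivity | ring].
Qed.

Definition root_poly (L : list R) (x : R) : R := fold_right (fun t p => (x - t) * p) 1 L.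

Lemma root_poly_In L x : In x L -> root_poly L x = 0.
Proof.
  unfold root_poly. induction L as [|t L IH]; cbn; [tauto|].
  intros [-> | H]; [ring | rewrite IH by exact H; ring].
Qed.

Lemma root_poly_neq0 L x : ~ In x L -> root_poly L x <> 0.
Proof.
  unfold root_poly. induction L as [|t L IH]; intro H; cbn; [lra|].
  apply Rmult_integral_contrapositive. split.
  - intro E. apply H. left. lra.
  - apply IH. intro H'. apply H. right. exact H'.
Qed.

Section PowerSums.

Variables (I : Type) (s : list I) (f : I -> R) (u : I -> nat -> C).
Hypothesis power_sums_lim0 : forall N : nat,
  filterlim (fun n => Csum s (fun i => (RtoC (f i ^ N) * u i n)%C)) eventually (locally (RtoC 0)).

(* The factor [x - t] turns the sums of index [N] into those of index [N + 1] minus [t] times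
   those of index [N]. *)
Lemma root_weighted_sums_lim0 L : forall N : nat,
  filterlim (fun n => Csum s (fun i => (RtoC (f i ^ N * root_poly L (f i)) * u i n)%C))
    eventually (locally (RtoC 0)).
Proof.
  induction L as [|t L IH]; intro N.
  - eapply filterlim_ext; [|apply (power_sums_lim0 N)]. intro n. cbn.
    apply Csum_ext_in. intros i _. rewrite Rmult_1_r. reflexivity.
  - eapply filterlim_ext; [|apply (lim0_Cplus _ _ (IH (S N)) (lim0_Cscal (RtoC (- t)) _ (IH N)))].
    intro n. cbn beta. rewrite <- Csum_scal, <- Csum_plus.
    apply Csum_ext_in. intros i _.
    assert (E : f i ^ N * root_poly (t :: L) (f i) =
                f i ^ S N * root_poly L (f i) + - t * (f i ^ N * root_poly L (f i)))
      by (unfold root_poly; cbn; ring).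
    rewrite E, RtoC_plus, (RtoC_mult (- t)). ring.
Qed.

(* Weight the power sums by the polynomial vanishing at every value of [f] other than [r]. *)
Lemma level_sums_lim0 r :
  filterlim (fun n => Csum (filter (fun i => Reqb (f i) r) s) (fun i => u i n))
    eventually (locally (RtoC 0)).
Proof.
  set (L := map f (filter (fun i => negb (Reqb (f i) r)) s)).
  assert (HW : root_poly L r <> 0).
  { apply root_poly_neq0. unfold L. rewrite in_map_iff. intros (i & Ei & Hi).
    apply filter_In in Hi as [_ Hi]. unfold Reqb in Hi.
    destruct (Req_EM_T (f i) r); [discriminate | contradiction]. }
  eapply filterlim_ext;
    [|apply (lim0_Cscal (RtoC (/ root_poly L r)) _ (root_weighted_sums_lim0 L 0))].
  intro n. cbn beta. rewrite <- Csum_filter, <- Csum_scal.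
  apply Csum_ext_in. intros i Hi. unfold Reqb. destruct (Req_EM_T (f i) r) as [E | E].
  - rewrite E, pow_O, Rmult_1_l, Cmult_assoc, <- RtoC_mult, Rinv_l by exact HW. ring.
  - rewrite (root_poly_In L (f i)), Rmult_0_r; [ring|].
    apply in_map, filter_In. split; [exact Hi|]. unfold Reqb.
    destruct (Req_EM_T (f i) r); [contradiction | reflexivity].
Qed.

Lemma level_singleton_Cmod r i A : filter (fun j => Reqb (f j) r) s = [i] ->
  (forall n, Cmod (u i n) = A) -> A = 0.
Proof.
  intros Hs HA. apply (Cmod_const_lim0 (u i)); [exact HA|].
  eapply filterlim_ext; [|apply (level_sums_lim0 r)]. intro n. rewrite Hs. cbn. ring.
Qed.

Lemma level_pair_Cmod r i j A B : filter (fun k => Reqb (f k) r) s = [i; j] ->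
  (forall n, Cmod (u i n) = A) -> (forall n, Cmod (u j n) = B) -> A = B.
Proof.
  intros Hs HA HB. apply (Cmod_const_sum_lim0 (u i) (u j)); [exact HA | exact HB|].
  eapply filterlim_ext; [|apply (level_sums_lim0 r)]. intro n. rewrite Hs. cbn. ring.
Qed.

End PowerSums.

(** * The four indices *)

Definition index_pairs : list (nat * nat) := [(1, 1); (1, 2); (2, 1); (2, 2)]%nat.

(* Contradictory branches must be discarded before [reflexivity] instantiates evars. *)
Ltac compute_filter :=
  unfold index_pairs, Reqb; cbn; repeat (destruct Req_EM_T; cbn);
  first [exfalso; congruence | reflexivity].

Ltac close_with_partner Hpair HA :=
  split; [discriminate|]; split; [cbn; tauto|]; split; [congruence|];
  first [ eapply Hpair; [compute_filter | apply HA | apply HA]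
        | symmetry; eapply Hpair; [compute_filter | apply HA | apply HA] ].

Lemma partner_of_nonvanishing (f A : nat -> nat -> R) (u : nat * nat -> nat -> C) :
  (f 1 1 <> f 2 2)%nat -> (f 1 2 <> f 2 1)%nat ->
  (forall j l n, Cmod (u (j, l) n) = A j l) ->
  (forall N : nat, filterlim
     (fun n => Csum index_pairs (fun p => (RtoC (f (fst p) (snd p) ^ N) * u p n)%C))
     eventually (locally (RtoC 0))) ->
  forall j l, In (j, l) index_pairs -> A j l <> 0 ->
  exists j' l', (j', l') <> (j, l) /\ In (j', l') index_pairs /\
                f j' l' = f j l /\ A j' l' = A j l.
Proof.
  intros F1 F2 HA Hsums j l Hjl HA0.
  pose proof (level_singleton_Cmod _ _ _ u Hsums (f j l)) as Hsing.
  pose proof (level_pair_Cmod _ _ _ u Hsums (f j l)) as Hpair.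
  cbn beta in Hsing, Hpair.
  destruct (Req_EM_T (f 1 1)%nat (f j l)), (Req_EM_T (f 1 2)%nat (f j l)),
    (Req_EM_T (f 2 1)%nat (f j l)), (Req_EM_T (f 2 2)%nat (f j l));
  destruct Hjl as [E | [E | [E | [E | []]]]]; injection E as <- <-; try congruence.
  all: first
    [ exfalso; apply HA0; eapply Hsing; [compute_filter | apply HA]
    | solve [exists 1%nat, 1%nat; close_with_partner Hpair HA]
    | solve [exists 1%nat, 2%nat; close_with_partner Hpair HA]
    | solve [exists 2%nat, 1%nat; close_with_partner Hpair HA]
    | solve [exists 2%nat, 2%nat; close_with_partner Hpair HA] ].
Qed.

Definition count_pairs (L : nat -> nat -> Prop) : nat :=
  length (filter (fun p => propb (L (fst p) (snd p))) index_pairs).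

Lemma propb_true P : P -> propb P = true.
Proof. unfold propb. destruct (excluded_middle_informative P); tauto. Qed.

Lemma propb_false P : ~ P -> propb P = false.
Proof. unfold propb. destruct (excluded_middle_informative P); tauto. Qed.

Ltac decide_member L j l H :=
  destruct (classic (L j l)) as [H | H];
  [rewrite (propb_true _ H) | rewrite (propb_false _ H)].

Ltac use_partner HP H :=
  let Hne := fresh "Hne" in let HL := fresh "HL" in
  let Hf := fresh "Hf" in let HA := fresh "HA" in let E := fresh "E" in
  destruct (HP _ _ H) as [_ (? & ? & Hne & HL & Hf & HA)];
  destruct (proj1 (HP _ _ HL)) as [E | [E | [E | [E | []]]]]; injection E as <- <-;
  try contradiction; try congruence.

Lemma count_pairs_structure (f A : nat -> nat -> R) (L : nat -> nat -> Prop) :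
  (f 1 1 <> f 2 2)%nat -> (f 1 2 <> f 2 1)%nat ->
  (~ (f 1 1 = f 2 1 /\ f 1 2 = f 2 2))%nat ->
  (forall j l, L j l -> In (j, l) index_pairs /\
     exists j' l', (j', l') <> (j, l) /\ L j' l' /\ f j' l' = f j l /\ A j' l' = A j l) ->
  (count_pairs L = 0%nat \/ count_pairs L = 2%nat \/ count_pairs L = 4%nat) /\
  (count_pairs L = 4%nat ->
     forall j : nat, (j = 1%nat \/ j = 2%nat) -> f j 1%nat = f j 2%nat /\ A j 1%nat = A j 2%nat) /\
  (count_pairs L = 2%nat ->
     forall j1 l1 j2 l2 : nat, (j1, l1) <> (j2, l2) -> L j1 l1 -> L j2 l2 ->
       ~ (((j1, l1) = (1, 1)%nat /\ (j2, l2) = (2, 2)%nat) \/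
          ((j1, l1) = (2, 2)%nat /\ (j2, l2) = (1, 1)%nat)) /\
       ~ (((j1, l1) = (2, 1)%nat /\ (j2, l2) = (1, 2)%nat) \/
          ((j1, l1) = (1, 2)%nat /\ (j2, l2) = (2, 1)%nat)) /\
       f j1 l1 = f j2 l2 /\ A j1 l1 = A j2 l2).
Proof.
  intros F1 F2 F3 HP.
  (* [congruence] cannot use a negated conjunction. *)
  assert (F3' : (f 1 1 = f 2 1 -> f 1 2 <> f 2 2)%nat) by tauto. clear F3.
  destruct (Req_dec (f 1 1)%nat (f 2 1)%nat) as [E | E]; [specialize (F3' E) | clear F3'].
  all: unfold count_pairs, index_pairs; cbn [filter fst snd].
  all: decide_member L 1%nat 1%nat L11; decide_member L 1%nat 2%nat L12;
       decide_member L 2%nat 1%nat L21; decide_member L 2%nat 2%nat L22; cbn [length].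
  all: try (use_partner HP L11); try (use_partner HP L12); try (use_partner HP L21);
       try (use_partner HP L22).
  all: split; [lia | split; [intros Hc j Hj | intros Hc j1 l1 j2 l2 Hne12 M1 M2]];
    try discriminate Hc.
  all: try (destruct Hj as [-> | ->]; split; congruence).
  all: destruct (proj1 (HP _ _ M1)) as [E1 | [E1 | [E1 | [E1 | []]]]]; injection E1 as <- <-;
    destruct (proj1 (HP _ _ M2)) as [E2 | [E2 | [E2 | [E2 | []]]]]; injection E2 as <- <-;
    try contradiction; try congruence;
    repeat split; try (intros [[X Y] | [X Y]]); congruence.
Qed.

Definition wave (q : R) (rho : R -> R) (phi : R -> C) (k : nat -> R) (te : R)
    (p : nat * nat) (n : nat) : C :=
  let (j, l) := p in
  (RtoC (PSI q rho j l te / sqrt (Rabs (DET q rho j l te))) * phi (Sjl q rho j l te)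
   * cis (phase j l + k n * PSIsmall q rho j l te))%C.

Lemma summand_eq q rho phi k te j l N n :
  summand q rho phi j l N (k n) te = (RtoC (fjl q rho j l te ^ N) * wave q rho phi k te (j, l) n)%C.
Proof. unfold summand, wave. unfold Rdiv. rewrite !RtoC_mult. ring. Qed.

Lemma full_sum_eq q rho phi k te N n :
  full_sum q rho phi N (k n) te =
  Csum index_pairs (fun p => (RtoC (fjl q rho (fst p) (snd p) te ^ N) * wave q rho phi k te p n)%C).
Proof. unfold full_sum, Csum, index_pairs. cbn [fold_right fst snd]. rewrite !summand_eq. ring. Qed.

Lemma Cmod_wave q rho phi k te j l n :
  Cmod (wave q rho phi k te (j, l) n) = ampl q rho phi j l te.
Proof.
  unfold wave, ampl, cis. rewrite !Cmod_mult, Cmod_R.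
  assert (Hcis : forall x, Cmod (cos x, sin x) = 1).
  { intro x. unfold Cmod. cbn [fst snd].
    replace (cos x ^ 2 + sin x ^ 2) with 1 by (rewrite <- (sin2_cos2 x); unfold Rsqr; ring).
    apply sqrt_1. }
  rewrite Hcis, Rmult_1_r. unfold Rdiv. rewrite Rabs_mult, Rabs_inv.
  rewrite (Rabs_pos_eq (sqrt _)) by apply sqrt_pos. ring.
Qed.

Lemma ampl_neq0 q rho phi j l te :
  PSI q rho j l te <> 0 -> DET q rho j l te <> 0 ->
  (ampl q rho phi j l te <> 0 <-> phi (Sjl q rho j l te) <> 0).
Proof.
  intros HP HD. unfold ampl.
  assert (0 < sqrt (Rabs (DET q rho j l te))) by (apply sqrt_lt_R0, Rabs_pos_lt, HD).
  assert (0 < Rabs (PSI q rho j l te)) by (apply Rabs_pos_lt, HP).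
  split; intros Hneq Z.
  - apply Hneq. rewrite Z, Cmod_0. unfold Rdiv. ring.
  - apply Hneq, Cmod_eq_0. apply (Rmult_eq_reg_r (Rabs (PSI q rho j l te) / sqrt (Rabs (DET q rho j l te)))).
    + rewrite Rmult_0_l, <- Z. unfold Rdiv. ring.
    + apply Rgt_not_eq, Rdiv_lt_0_compat; assumption.
Qed.

Lemma In_index_pairs j l : In (j, l) index_pairs <-> (j = 1 \/ j = 2)%nat /\ (l = 1 \/ l = 2)%nat.
Proof.
  unfold index_pairs. cbn. split.
  - intros [E | [E | [E | [E | []]]]]; injection E as <- <-; tauto.
  - intros [[-> | ->] [-> | ->]]; tauto.
Qed.

Theorem corollary2 (q : R) (rho : R -> R) (phi : R -> C) (k : nat -> R) :
  1 < q ->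
  (forall t, 0 < rho t) ->
  (forall t, rho (t + 2 * PI) = rho t) ->
  (forall t, ex_derive rho t) ->
  (forall t, ex_derive (Derive rho) t) ->
  (forall t, continuous (Derive_n rho 2) t) ->
  (forall t, Derive_n (fun x => ln (rho x)) 2 t < sqrt q / (1 + sqrt q)) ->
  (forall t, phi (t + 2 * PI) = phi t) ->
  (forall t, continuous phi t) ->
  (forall n, 0 < k n) ->
  is_lim_seq k p_infty ->
  (forall (te : R) (N : nat),
      filterlim (fun n => full_sum q rho phi N (k n) te) eventually (locally (RtoC 0))) ->
  forall te : R,
  Derive rho te * Derive rho (te + PI) <> 0 ->
  (card_Lambda q rho phi te = 0%nat \/ card_Lambda q rho phi te = 2%nat \/
   card_Lambda q rho phi te = 4%nat) /\
  (card_Lambda q rho phi te = 4%nat ->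
     forall j : nat, (j = 1%nat \/ j = 2%nat) ->
       fjl q rho j 1 te = fjl q rho j 2 te /\
       ampl q rho phi j 1 te = ampl q rho phi j 2 te) /\
  (card_Lambda q rho phi te = 2%nat ->
     forall j1 l1 j2 l2 : nat,
       (j1, l1) <> (j2, l2) ->
       in_Lambda q rho phi j1 l1 te -> in_Lambda q rho phi j2 l2 te ->
       ~ (((j1, l1) = (1, 1)%nat /\ (j2, l2) = (2, 2)%nat) \/
          ((j1, l1) = (2, 2)%nat /\ (j2, l2) = (1, 1)%nat)) /\
       ~ (((j1, l1) = (2, 1)%nat /\ (j2, l2) = (1, 2)%nat) \/
          ((j1, l1) = (1, 2)%nat /\ (j2, l2) = (2, 1)%nat)) /\
       fjl q rho j1 l1 te = fjl q rho j2 l2 te /\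
       ampl q rho phi j1 l1 te = ampl q rho phi j2 l2 te).
Proof.
  intros Hq Hpos Hper Hd1 Hd2 _ Hlnrho _ _ _ _ Hlim te Hd.
  destruct (fjl_separation q rho Hq Hpos Hper Hd1 Hd2 Hlnrho te Hd) as (F1 & F2 & F3).
  apply (count_pairs_structure (fun j l => fjl q rho j l te) (fun j l => ampl q rho phi j l te)
           (fun j l => in_Lambda q rho phi j l te) F1 F2 F3).
  intros j l (Hj & Hl & Hphi).
  assert (Hin : In (j, l) index_pairs) by (apply In_index_pairs; tauto).
  destruct (PSI_DET_neq0 q rho Hq Hpos Hd1 Hd2 Hlnrho j l te Hj Hl) as [HP HD].
  split; [exact Hin|].
  destruct (partner_of_nonvanishing (fun j l => fjl q rho j l te) (fun j l => ampl q rho phi j l te)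
              (wave q rho phi k te) F1 F2 (Cmod_wave q rho phi k te)
              (fun N => filterlim_ext _ _ (full_sum_eq q rho phi k te N) (Hlim te N))
              j l Hin (proj2 (ampl_neq0 q rho phi j l te HP HD) Hphi))
    as (j' & l' & Hne & Hin' & Hf & HA).
  apply In_index_pairs in Hin' as [Hj' Hl'].
  destruct (PSI_DET_neq0 q rho Hq Hpos Hd1 Hd2 Hlnrho j' l' te Hj' Hl') as [HP' HD'].
  exists j', l'. repeat split; try assumption.
  apply (ampl_neq0 q rho phi j' l' te HP' HD'). cbn in HA. rewrite HA.
  apply (ampl_neq0 q rho phi j l te HP HD), Hphi.
Qed.
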